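(* Let $G$ be a localic group. There is an isomorphism of categories $Cmd_0(G)\cong\mathcal{R}el(\beta^G)$ making the triangle with the forgetful functors $T:Cmd_0(G)\to s\ell_0=\mathcal{R}el$ and $\mathcal{R}el(F):\mathcal{R}el(\beta^G)\to\mathcal{R}el$ commute. Moreover, the identification between relations $R\subseteq X\times X'$ and linear maps $\ell X\to\ell X'$ lifts to this isomorphism.
   Context: A localic group is a group object in $Loc^{op}$, equivalently a (commutative) Hopf algebra in the monoidal category $s\ell$ of sup-lattices whose underlying algebra is a locale (multiplication $\wedge$, unit $1$), with comultiplication $w$, counit $e$, antipode $\iota$. For a set $X$, $\ell X$ is its power set; $s\ell_0$ is the full subcategory of sup-lattices $\ell X$, isomorphic to the category $\mathcal{R}el$ of sets and relations. $Cmd_0(G)$ is the category of $G$-comodules $\rho:\ell X\to G\otimes\ell X$ (satisfying $(G\otimes\rho)\rho=(w\otimes\ell X)\rho$ and $(e\otimes\ell X)\rho\cong\mathrm{id}$) with comodule morphisms. For a set $X$, $Aut(X)$ is the universal locale with an $\ell$-bijection $X\times X\to Aut(X)$, $(x,y)\mapsto\langle x|y\rangle$ (where an $\ell$-bijection $\lambda$ satisfies $\bigvee_y\lambda(x,y)=1$, $\lambda(x,y_1)\wedge\lambda(x,y_2)=0$ for $y_1\ne y_2$, and the two symmetric conditions), a localic group with $w\langle x|y\rangle=\bigvee_z\langle x|z\rangle\otimes\langle z|y\rangle$, $e\langle x|y\rangle=\delta_{x=y}$, $\iota\langle x|y\rangle=\langle y|x\rangle$. $\beta^G$ is the category of sets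 $X$ with an action, i.e. a Hopf algebra morphism $Aut(X)\to G$ (equivalently an $\ell$-bijection $\mu:X\times X\to G$ with $w\mu=(\mu\otimes\mu)w$, $e\mu=e$, $\mu\iota=\iota\mu$), morphisms being functions $f$ with $\mu(a,b)\le\mu'(f(a),f(b))$; $F:\beta^G\to\mathcal{E}ns$ is forgetful and $\mathcal{R}el(\beta^G)$ its category of relations. *)

Record Locale := {
  L_car :> Type;
  L_le : L_car -> L_car -> Prop;
  L_sup : (L_car -> Prop) -> L_car;
  L_meet : L_car -> L_car -> L_car;
  L_top : L_car;
  L_le_refl : forall a, L_le a a;
  L_le_trans : forall a b c, L_le a b -> L_le b c -> L_le a c;
  L_le_antisym : forall a b, L_le a b -> L_le b a -> a = b;
  L_sup_ub : forall (U : L_car -> Prop) a, U a -> L_le a (L_sup U);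
  L_sup_least : forall (U : L_car -> Prop) b,
      (forall a, U a -> L_le a b) -> L_le (L_sup U) b;
  L_meet_glb : forall a b c, L_le c (L_meet a b) <-> (L_le c a /\ L_le c b);
  L_top_greatest : forall a, L_le a L_top;
  L_distr : forall a (U : L_car -> Prop),
      L_meet a (L_sup U) = L_sup (fun y => exists u, U u /\ y = L_meet a u)
}.

Arguments L_le {_}. Arguments L_sup {_}. Arguments L_meet {_}. Arguments L_top {_}.

Definition L_bot (G : Locale) : G := L_sup (fun _ : G => False).

(* Tensor products of sup-lattices (Joyal--Tierney): the elements of   *)
(* G (x) G are the subsets of G x G that are down-closed and closed    *)
(* under joins in each variable separately; the order is inclusion,    *)
(* the join is the closure of the union, a (x) b is the closure of     *)
(* {(a,b)}.  For a locale G, the meet of G (x) G (its algebra          *)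
(* structure) is intersection and its top is G x G.  Similarly for     *)
(* G (x) G (x) G.                                                       *)
Definition tideal2 (G : Locale) (S : G -> G -> Prop) : Prop :=
  (forall a b a' b', S a b -> L_le a' a -> L_le b' b -> S a' b') /\
  (forall (U : G -> Prop) b, (forall a, U a -> S a b) -> S (L_sup U) b) /\
  (forall a (U : G -> Prop), (forall b, U b -> S a b) -> S a (L_sup U)).

Definition cl2 (G : Locale) (R : G -> G -> Prop) : G -> G -> Prop :=
  fun a b => forall S, tideal2 G S -> (forall x y, R x y -> S x y) -> S a b.

Definition tideal3 (G : Locale) (S : G -> G -> G -> Prop) : Prop :=
  (forall a b c a' b' c', S a b c -> L_le a' a -> L_le b' b -> L_le c' c ->
       S a' b' c') /\
  (forall (U : G -> Prop) b c, (forall a, U a -> S a b c) -> S (L_sup U) b c) /\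
  (forall a (U : G -> Prop) c, (forall b, U b -> S a b c) -> S a (L_sup U) c) /\
  (forall a b (U : G -> Prop), (forall c, U c -> S a b c) -> S a b (L_sup U)).

Definition cl3 (G : Locale) (R : G -> G -> G -> Prop) : G -> G -> G -> Prop :=
  fun a b c => forall S, tideal3 G S -> (forall x y z, R x y z -> S x y z) -> S a b c.

Definition teq2 {G : Locale} (S T : G -> G -> Prop) : Prop :=
  forall a b, S a b <-> T a b.
Definition teq3 {G : Locale} (S T : G -> G -> G -> Prop) : Prop :=
  forall a b c, S a b c <-> T a b c.

(* Localic group = (commutative) Hopf algebra in sup-lattices whose    *)
(* underlying algebra is the locale G:                                  *)
(*   w : G -> G (x) G   (w g a b  means  (a,b) belongs to w(g)),         *)
(*   e : G -> Omega     (Omega = Prop, the sup-lattice l(1)),            *)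
(* w, e, iota are locale (frame) morphisms (group object in Loc^op).    *)
Record IsLocalicGroup (G : Locale) (w : G -> G -> G -> Prop)
    (e : G -> Prop) (iota : G -> G) : Prop := {
  w_ideal : forall g, tideal2 G (w g);
  w_sup : forall U : G -> Prop,
      teq2 (w (L_sup U)) (cl2 G (fun a b => exists u, U u /\ w u a b));
  w_meet : forall g h, teq2 (w (L_meet g h)) (fun a b => w g a b /\ w h a b);
  w_top : teq2 (w L_top) (fun _ _ => True);
  (* coassociativity: (w (x) G) w = (G (x) w) w  in G (x) G (x) G *)
  w_coassoc : forall g,
      teq3 (cl3 G (fun a b c => exists u c0, w g u c0 /\ w u a b /\ L_le c c0))
           (cl3 G (fun a b c => exists a0 v, w g a0 v /\ w v b c /\ L_le a a0));
  e_sup : forall U : G -> Prop, e (L_sup U) <-> exists u, U u /\ e u;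
  e_meet : forall g h, e (L_meet g h) <-> e g /\ e h;
  e_top : e L_top;
  (* counit: (e (x) G) w = id = (G (x) e) w *)
  counit_l : forall g, L_sup (fun b => exists a, w g a b /\ e a) = g;
  counit_r : forall g, L_sup (fun a => exists b, w g a b /\ e b) = g;
  iota_sup : forall U : G -> Prop,
      iota (L_sup U) = L_sup (fun y => exists u, U u /\ y = iota u);
  iota_meet : forall g h, iota (L_meet g h) = L_meet (iota g) (iota h);
  iota_top : iota L_top = L_top;
  (* antipode: m (iota (x) G) w = u e = m (G (x) iota) w,  u : Omega -> G *)
  antipode_l : forall g,
      L_sup (fun x => exists a b, w g a b /\ x = L_meet (iota a) b)
      = L_sup (fun x => e g /\ x = L_top);
  antipode_r : forall g,
      L_sup (fun x => exists a b, w g a b /\ x = L_meet a (iota b))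
      = L_sup (fun x => e g /\ x = L_top)
}.

(* Cmd_0(G).  Using G (x) l X = G^X, a sup-lattice map                 *)
(* rho : l X -> G (x) l X  is a matrix  rho : X -> X -> G  with         *)
(* rho({x}) = \/_y rho x y (x) {y}.                                     *)
Definition is_coaction (G : Locale) (w : G -> G -> G -> Prop) (e : G -> Prop)
    (X : Type) (rho : X -> X -> G) : Prop :=
  (* (G (x) rho) rho = (w (x) l X) rho *)
  (forall x z, teq2 (w (rho x z))
                    (cl2 G (fun a b => exists y, a = rho x y /\ b = rho y z))) /\
  (* (e (x) l X) rho = id *)
  (forall x y, e (rho x y) <-> x = y).

(* A relation R ⊆ X × X' is the linear map l X -> l X', {x} |-> {x' | R x x'};
   it is a comodule morphism iff  rho' f_R = (G (x) f_R) rho. *)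
Definition is_comod_morph (G : Locale) (X X' : Type)
    (rho : X -> X -> G) (rho' : X' -> X' -> G) (R : X -> X' -> Prop) : Prop :=
  forall x y',
    L_sup (fun g => exists x', R x x' /\ g = rho' x' y')
    = L_sup (fun g => exists y, R y y' /\ g = rho x y).

Definition is_lbij (G : Locale) (X : Type) (mu : X -> X -> G) : Prop :=
  (forall x, L_sup (fun g => exists y, g = mu x y) = L_top) /\
  (forall x y1 y2, y1 <> y2 -> L_meet (mu x y1) (mu x y2) = L_bot G) /\
  (forall y, L_sup (fun g => exists x, g = mu x y) = L_top) /\
  (forall x1 x2 y, x1 <> x2 -> L_meet (mu x1 y) (mu x2 y) = L_bot G).

Definition is_action (G : Locale) (w : G -> G -> G -> Prop) (e : G -> Prop)
    (iota : G -> G) (X : Type) (mu : X -> X -> G) : Prop :=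
  is_lbij G X mu /\
  (forall x y, teq2 (w (mu x y))
                    (cl2 G (fun a b => exists z, a = mu x z /\ b = mu z y))) /\
  (forall x y, e (mu x y) <-> x = y) /\
  (forall x y, iota (mu x y) = mu y x).

Definition is_beta_morph (G : Locale) (X X' : Type)
    (mu : X -> X -> G) (mu' : X' -> X' -> G) (f : X -> X') : Prop :=
  forall a b, L_le (mu a b) (mu' (f a) (f b)).

Definition beta_jmonic (G : Locale) w e iota (X X' S : Type)
    (sigma : S -> S -> G) (f : S -> X) (g : S -> X') : Prop :=
  forall (T : Type) (tau : T -> T -> G) (h k : T -> S),
    is_action G w e iota T tau ->
    is_beta_morph G T S tau sigma h -> is_beta_morph G T S tau sigma k ->
    (forall t, f (h t) = f (k t) /\ g (h t) = g (k t)) ->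
    forall t, h t = k t.

Definition is_beta_rel_span (G : Locale) w e iota (X X' : Type)
    (mu : X -> X -> G) (mu' : X' -> X' -> G)
    (S : Type) (sigma : S -> S -> G) (f : S -> X) (g : S -> X') : Prop :=
  is_action G w e iota S sigma /\
  is_beta_morph G S X sigma mu f /\ is_beta_morph G S X' sigma mu' g /\
  beta_jmonic G w e iota X X' S sigma f g.

(* Rel(F) sends a span to its image relation in X × X'. *)
Definition span_image {X X' S : Type} (f : S -> X) (g : S -> X') : X -> X' -> Prop :=
  fun x x' => exists s, f s = x /\ g s = x'.

(* Two spans represent the same morphism of Rel(beta^G) iff isomorphic. *)
Definition beta_spans_iso (G : Locale) (X X' : Type)
    (S : Type) (sigma : S -> S -> G) (f : S -> X) (g : S -> X')
    (S' : Type) (sigma' : S' -> S' -> G) (f' : S' -> X) (g' : S' -> X') : Prop :=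
  exists (phi : S -> S') (psi : S' -> S),
    is_beta_morph G S S' sigma sigma' phi /\ is_beta_morph G S' S sigma' sigma psi /\
    (forall s, psi (phi s) = s) /\ (forall s', phi (psi s') = s') /\
    (forall s, f' (phi s) = f s /\ g' (phi s) = g s).

From Stdlib Require Import Classical ProofIrrelevance IndefiniteDescription.

(* Since G (x) l X = G^X, a coaction on l X is a matrix rho : X x X -> G, and the comodule
   axioms are literally the w- and e-conditions of an action, so Phi is the identity. The
   antipode supplies the rest: applied to w(rho(x,z)) = \/_y rho(x,y) (x) rho(y,z) it yields
   \/_y iota(rho(x,y)) /\ rho(y,x) = 1 and iota(rho(x,y)) /\ rho(y,z) = 0 for x <> z, whence
   iota(rho(y,x)) = rho(x,y) and rho is an l-bijection.
   On arrows, both sides are subsets of X x X' invariant under the diagonal action mu /\ mu'.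
   A jointly monic span of G-sets is injective into X x X' (test monicity on its kernel pair,
   itself a G-set) and its action is the restriction of mu /\ mu' (it is below it, and both
   are l-bijections), so a span is determined up to isomorphism by its image. *)

Section LocaleFacts.
Context {G : Locale}.

Lemma meet_l (a b : G) : L_le (L_meet a b) a.
Proof. exact (proj1 (proj1 (L_meet_glb G a b _) (L_le_refl G _))). Qed.

Lemma meet_r (a b : G) : L_le (L_meet a b) b.
Proof. exact (proj2 (proj1 (L_meet_glb G a b _) (L_le_refl G _))). Qed.

Lemma le_meet (a b c : G) : L_le c a -> L_le c b -> L_le c (L_meet a b).
Proof. intros; apply L_meet_glb; auto. Qed.

Lemma meet_comm (a b : G) : L_meet a b = L_meet b a.
Proof. apply L_le_antisym; apply le_meet; (apply meet_l || apply meet_r). Qed.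

Lemma meet_idem (a : G) : L_meet a a = a.
Proof. apply L_le_antisym; [apply meet_l | apply le_meet; apply L_le_refl]. Qed.

Lemma meet_mono (a a' b b' : G) :
  L_le a a' -> L_le b b' -> L_le (L_meet a b) (L_meet a' b').
Proof.
  intros; apply le_meet.
  - eapply L_le_trans; [apply meet_l | assumption].
  - eapply L_le_trans; [apply meet_r | assumption].
Qed.

Lemma le_sup (U : G -> Prop) (a b : G) : U a -> L_le b a -> L_le b (L_sup U).
Proof. intros; eapply L_le_trans; eauto; apply L_sup_ub; assumption. Qed.

Lemma sup_le_sup (U V : G -> Prop) :
  (forall u, U u -> exists v, V v /\ L_le u v) -> L_le (L_sup U) (L_sup V).
Proof.
  intros H; apply L_sup_least; intros u Hu.
  destruct (H u Hu) as [v [Hv Huv]]; eapply le_sup; eauto.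
Qed.

Lemma sup_ext (U V : G -> Prop) : (forall y, U y <-> V y) -> L_sup U = L_sup V.
Proof. intros H; apply L_le_antisym; apply L_sup_least; intros; apply L_sup_ub, H; assumption. Qed.

Lemma bot_le (a : G) : L_le (L_bot G) a.
Proof. apply L_sup_least; intros _ []. Qed.

Lemma le_bot_eq (a : G) : L_le a (L_bot G) -> a = L_bot G.
Proof. intros; apply L_le_antisym; auto using bot_le. Qed.

Lemma meet_top_r (a : G) : L_meet a L_top = a.
Proof.
  apply L_le_antisym; [apply meet_l | apply le_meet; [apply L_le_refl | apply L_top_greatest]].
Qed.

Lemma meet_sup_l (U : G -> Prop) (c : G) :
  L_meet (L_sup U) c = L_sup (fun y => exists u, U u /\ y = L_meet u c).
Proof.
  rewrite meet_comm, L_distr; apply sup_ext; intros y.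
  split; intros [u [Hu ->]]; exists u; split; auto; apply meet_comm.
Qed.

Lemma meet_sup_le_r (a : G) (U : G -> Prop) (c : G) :
  (forall u, U u -> L_le (L_meet a u) c) -> L_le (L_meet a (L_sup U)) c.
Proof. intros H; rewrite L_distr; apply L_sup_least; intros y [u [Hu ->]]; auto. Qed.

Lemma meet_sup_le_l (U : G -> Prop) (b c : G) :
  (forall u, U u -> L_le (L_meet u b) c) -> L_le (L_meet (L_sup U) b) c.
Proof. intros H; rewrite meet_comm; apply meet_sup_le_r; intros; rewrite meet_comm; auto. Qed.

Lemma le_of_cover (U : G -> Prop) (a c : G) :
  L_le L_top (L_sup U) -> (forall u, U u -> L_le (L_meet a u) c) -> L_le a c.
Proof.
  intros Htop H; rewrite <- (meet_top_r a).
  eapply L_le_trans; [apply meet_mono; [apply L_le_refl | exact Htop] |].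
  apply meet_sup_le_r; assumption.
Qed.

Lemma disjoint_meet_le {a b c d z : G} :
  L_meet a b = L_bot G -> L_le c a -> L_le d b -> L_le (L_meet c d) z.
Proof.
  intros Hab Hc Hd; eapply L_le_trans; [apply meet_mono; eauto |].
  rewrite Hab; apply bot_le.
Qed.

Definition sup_preserving (h : G -> G) : Prop :=
  forall U, h (L_sup U) = L_sup (fun y => exists u, U u /\ y = h u).

Lemma sup_preserving_id : sup_preserving (fun a => a).
Proof.
  intros U; apply sup_ext; intros y.
  split; [intros Hy; exists y | intros [u [Hu ->]]]; auto.
Qed.

Lemma sup_preserving_mono (h : G -> G) (a b : G) :
  sup_preserving h -> L_le a b -> L_le (h a) (h b).
Proof.
  intros Hh Hab.
  assert (Hb : b = L_sup (fun x => x = a \/ x = b)).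
  { apply L_le_antisym; [apply L_sup_ub; auto |].
    apply L_sup_least; intros x [-> | ->]; auto using L_le_refl. }
  rewrite Hb, Hh; apply L_sup_ub; exists a; auto.
Qed.

End LocaleFacts.

Section TensorClosure.
Context {G : Locale}.

Lemma cl2_incl (R : G -> G -> Prop) a b : R a b -> cl2 G R a b.
Proof. intros H S _ HR; auto. Qed.

Lemma cl2_ideal (R : G -> G -> Prop) : tideal2 G (cl2 G R).
Proof.
  split; [|split].
  - intros a b a' b' H Ha Hb S HS HR; apply (proj1 HS a b); auto; apply H; auto.
  - intros U b H S HS HR; apply (proj1 (proj2 HS)); intros; apply H; auto.
  - intros a U H S HS HR; apply (proj2 (proj2 HS)); intros; apply H; auto.
Qed.

Lemma cl2_min (R S : G -> G -> Prop) :
  tideal2 G S -> (forall a b, R a b -> S a b) -> forall a b, cl2 G R a b -> S a b.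
Proof. intros HS HR a b H; apply H; auto. Qed.

Lemma tideal2_bot_l (S : G -> G -> Prop) : tideal2 G S -> forall b, S (L_bot G) b.
Proof. intros HS b; apply (proj1 (proj2 HS)); intros _ []. Qed.

Lemma tideal2_meet_r (Q : G -> G -> Prop) (c d : G) :
  tideal2 G Q -> tideal2 G (fun a b => Q (L_meet a c) (L_meet b d)).
Proof.
  intros HQ; split; [|split].
  - intros a b a' b' H Ha Hb; apply (proj1 HQ _ _ _ _ H); apply meet_mono; auto using L_le_refl.
  - intros U b H; rewrite meet_sup_l; apply (proj1 (proj2 HQ)); intros y [u [Hu ->]]; auto.
  - intros a U H; rewrite meet_sup_l; apply (proj2 (proj2 HQ)); intros y [u [Hu ->]]; auto.
Qed.

Lemma tideal2_meet_l (Q : G -> G -> Prop) (a b : G) :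
  tideal2 G Q -> tideal2 G (fun c d => Q (L_meet a c) (L_meet b d)).
Proof.
  intros HQ; split; [|split].
  - intros c d c' d' H Hc Hd; apply (proj1 HQ _ _ _ _ H); apply meet_mono; auto using L_le_refl.
  - intros U d H; rewrite L_distr; apply (proj1 (proj2 HQ)); intros y [u [Hu ->]]; auto.
  - intros c U H; rewrite L_distr; apply (proj2 (proj2 HQ)); intros y [u [Hu ->]]; auto.
Qed.

(* The meet of G (x) G is intersection; on generators
   (p1 (x) p2) /\ (q1 (x) q2) = (p1 /\ q1) (x) (p2 /\ q2). *)
Definition rel_meet (P1 P2 : G -> G -> Prop) (a b : G) : Prop :=
  exists p1 p2 q1 q2, P1 p1 p2 /\ P2 q1 q2 /\ a = L_meet p1 q1 /\ b = L_meet p2 q2.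

Lemma cl2_meet (P1 P2 : G -> G -> Prop) a b :
  cl2 G P1 a b -> cl2 G P2 a b -> cl2 G (rel_meet P1 P2) a b.
Proof.
  intros H1 H2.
  pose proof (cl2_ideal (rel_meet P1 P2)) as HQ.
  assert (H1' : forall c d, P2 c d -> cl2 G (rel_meet P1 P2) (L_meet a c) (L_meet b d)).
  { intros c d Hcd.
    apply (cl2_min P1 (fun a b => cl2 G (rel_meet P1 P2) (L_meet a c) (L_meet b d))); auto.
    - apply tideal2_meet_r; assumption.
    - intros p1 p2 Hp; apply cl2_incl; exists p1, p2, c, d; auto. }
  enough (H : cl2 G (rel_meet P1 P2) (L_meet a a) (L_meet b b))
    by (rewrite !meet_idem in H; exact H).
  apply (cl2_min P2 (fun c d => cl2 G (rel_meet P1 P2) (L_meet a c) (L_meet b d))); auto.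
  apply tideal2_meet_l; assumption.
Qed.

Lemma cl2_meet_image_le (h1 h2 : G -> G) (R : G -> G -> Prop) (c : G) :
  sup_preserving h1 -> sup_preserving h2 ->
  (forall a b, R a b -> L_le (L_meet (h1 a) (h2 b)) c) ->
  forall a b, cl2 G R a b -> L_le (L_meet (h1 a) (h2 b)) c.
Proof.
  intros Hh1 Hh2 HR; apply cl2_min; auto.
  split; [|split].
  - intros a b a' b' H Ha Hb; eapply L_le_trans; [| exact H].
    apply meet_mono; apply sup_preserving_mono; assumption.
  - intros U b H; rewrite Hh1; apply meet_sup_le_l; intros y [u [Hu ->]]; auto.
  - intros a U H; rewrite Hh2; apply meet_sup_le_r; intros y [u [Hu ->]]; auto.
Qed.

End TensorClosure.

Section LocalicGroup.
Context {G : Locale} {w : G -> G -> G -> Prop} {e : G -> Prop} {iota : G -> G}.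
Hypothesis HG : IsLocalicGroup G w e iota.

Lemma iota_sup_preserving : sup_preserving iota.
Proof. exact (iota_sup _ _ _ _ HG). Qed.

Lemma iota_bot : iota (L_bot G) = L_bot G.
Proof.
  unfold L_bot; rewrite iota_sup_preserving.
  apply sup_ext; intros y; split; [intros [u [[] _]] | intros []].
Qed.

Lemma antipode_l_null (g a b : G) : ~ e g -> w g a b -> L_meet (iota a) b = L_bot G.
Proof.
  intros Hg Hab; apply le_bot_eq; eapply L_le_trans.
  { apply (L_sup_ub G (fun y => exists a b, w g a b /\ y = L_meet (iota a) b)); eauto. }
  rewrite (antipode_l _ _ _ _ HG); apply L_sup_least; intros y [He _]; contradiction.
Qed.

Lemma antipode_r_null (g a b : G) : ~ e g -> w g a b -> L_meet a (iota b) = L_bot G.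
Proof.
  intros Hg Hab; apply le_bot_eq; eapply L_le_trans.
  { apply (L_sup_ub G (fun y => exists a b, w g a b /\ y = L_meet a (iota b))); eauto. }
  rewrite (antipode_r _ _ _ _ HG); apply L_sup_least; intros y [He _]; contradiction.
Qed.

Lemma antipode_l_cover (g : G) (R : G -> G -> Prop) :
  e g -> teq2 (w g) (cl2 G R) ->
  L_le L_top (L_sup (fun y => exists a b, R a b /\ y = L_meet (iota a) b)).
Proof.
  intros Hg Hw; eapply L_le_trans.
  { apply (L_sup_ub G (fun y => e g /\ y = L_top)); auto. }
  rewrite <- (antipode_l _ _ _ _ HG); apply L_sup_least; intros y [a [b [Hab ->]]].
  apply Hw in Hab; revert a b Hab.
  apply (cl2_meet_image_le iota (fun b => b)); auto using iota_sup_preserving, sup_preserving_id.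
  intros a b Hab; apply L_sup_ub; exists a, b; auto.
Qed.

Lemma antipode_r_cover (g : G) (R : G -> G -> Prop) :
  e g -> teq2 (w g) (cl2 G R) ->
  L_le L_top (L_sup (fun y => exists a b, R a b /\ y = L_meet a (iota b))).
Proof.
  intros Hg Hw; eapply L_le_trans.
  { apply (L_sup_ub G (fun y => e g /\ y = L_top)); auto. }
  rewrite <- (antipode_r _ _ _ _ HG); apply L_sup_least; intros y [a [b [Hab ->]]].
  apply Hw in Hab; revert a b Hab.
  apply (cl2_meet_image_le (fun a => a) iota); auto using iota_sup_preserving, sup_preserving_id.
  intros a b Hab; apply L_sup_ub; exists a, b; auto.
Qed.

Section Coaction.
Context {X : Type} {A : X -> X -> G}.
Hypothesis HA : is_coaction G w e X A.

Lemma coaction_w_gen (x y z : X) : w (A x z) (A x y) (A y z).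
Proof. apply (proj1 HA); apply cl2_incl; exists y; auto. Qed.

Lemma coaction_null_l (x y z : X) : x <> z -> L_meet (iota (A x y)) (A y z) = L_bot G.
Proof.
  intros Hxz; apply (antipode_l_null (A x z));
    [rewrite (proj2 HA); exact Hxz | apply coaction_w_gen].
Qed.

Lemma coaction_null_r (x y z : X) : x <> z -> L_meet (A x y) (iota (A y z)) = L_bot G.
Proof.
  intros Hxz; apply (antipode_r_null (A x z));
    [rewrite (proj2 HA); exact Hxz | apply coaction_w_gen].
Qed.

Lemma coaction_cover_l (x : X) :
  L_le L_top (L_sup (fun g => exists y, g = L_meet (iota (A x y)) (A y x))).
Proof.
  eapply L_le_trans.
  - apply (antipode_l_cover (A x x) (fun a b => exists y, a = A x y /\ b = A y x)).
    + apply (proj2 HA); reflexivity.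
    + apply (proj1 HA).
  - apply sup_le_sup; intros _ [a [b [[y [-> ->]] ->]]].
    exists (L_meet (iota (A x y)) (A y x)); split; [exists y | apply L_le_refl]; auto.
Qed.

Lemma coaction_cover_r (x : X) :
  L_le L_top (L_sup (fun g => exists y, g = L_meet (A x y) (iota (A y x)))).
Proof.
  eapply L_le_trans.
  - apply (antipode_r_cover (A x x) (fun a b => exists y, a = A x y /\ b = A y x)).
    + apply (proj2 HA); reflexivity.
    + apply (proj1 HA).
  - apply sup_le_sup; intros _ [a [b [[y [-> ->]] ->]]].
    exists (L_meet (A x y) (iota (A y x))); split; [exists y | apply L_le_refl]; auto.
Qed.

Lemma coaction_iota (x y : X) : iota (A y x) = A x y.
Proof.
  apply L_le_antisym.
  - apply (le_of_cover _ _ _ (coaction_cover_r x)); intros _ [u ->].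
    destruct (classic (u = y)) as [-> | Hne].
    + eapply L_le_trans; [apply meet_r | apply meet_l].
    + apply (disjoint_meet_le (coaction_null_l y x u (not_eq_sym Hne)));
        [apply L_le_refl | apply meet_l].
  - apply (le_of_cover _ _ _ (coaction_cover_l y)); intros _ [u ->].
    destruct (classic (u = x)) as [-> | Hne].
    + eapply L_le_trans; [apply meet_r | apply meet_l].
    + apply (disjoint_meet_le (coaction_null_r x y u (not_eq_sym Hne)));
        [apply L_le_refl | apply meet_l].
Qed.

Lemma coaction_lbij : is_lbij G X A.
Proof.
  split; [|split; [|split]].
  - intros x; apply L_le_antisym; [apply L_top_greatest |].
    eapply L_le_trans; [apply (coaction_cover_r x) |].
    apply sup_le_sup; intros _ [y ->]; exists (A x y); split; [exists y | apply meet_l]; auto.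
  - intros x y1 y2 Hne; rewrite <- (coaction_iota x y1); apply coaction_null_l; exact Hne.
  - intros y; apply L_le_antisym; [apply L_top_greatest |].
    eapply L_le_trans; [apply (coaction_cover_l y) |].
    apply sup_le_sup; intros _ [x ->]; exists (A x y); split; [exists x | apply meet_r]; auto.
  - intros x1 x2 y Hne; rewrite <- (coaction_iota x2 y); apply coaction_null_r; exact Hne.
Qed.

Lemma coaction_action : is_action G w e iota X A.
Proof.
  split; [apply coaction_lbij | split; [apply (proj1 HA) | split]].
  - apply (proj2 HA).
  - intros; apply coaction_iota.
Qed.

End Coaction.
End LocalicGroup.

Section Action.
Context {G : Locale} {w : G -> G -> G -> Prop} {e : G -> Prop} {iota : G -> G}.
Context {X : Type} {mu : X -> X -> G}.
Hypothesis Hmu : is_action G w e iota X mu.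

Lemma le_of_action_row (x : X) (a c : G) :
  (forall y, L_le (L_meet a (mu x y)) c) -> L_le a c.
Proof.
  intros H; apply (le_of_cover (fun g => exists y, g = mu x y)).
  - rewrite (proj1 (proj1 Hmu) x); apply L_le_refl.
  - intros _ [y ->]; apply H.
Qed.

Lemma le_of_action_col (y : X) (a c : G) :
  (forall x, L_le (L_meet a (mu x y)) c) -> L_le a c.
Proof.
  intros H; apply (le_of_cover (fun g => exists x, g = mu x y)).
  - rewrite (proj1 (proj2 (proj2 (proj1 Hmu))) y); apply L_le_refl.
  - intros _ [x ->]; apply H.
Qed.

Lemma action_row_disjoint (x y1 y2 : X) : y1 <> y2 -> L_meet (mu x y1) (mu x y2) = L_bot G.
Proof. apply (proj1 (proj2 (proj1 Hmu))). Qed.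

Lemma action_col_disjoint (x1 x2 y : X) : x1 <> x2 -> L_meet (mu x1 y) (mu x2 y) = L_bot G.
Proof. apply (proj2 (proj2 (proj2 (proj1 Hmu)))). Qed.

Lemma action_iota (x y : X) : iota (mu x y) = mu y x.
Proof. apply (proj2 (proj2 (proj2 Hmu))). Qed.

Lemma action_coaction : is_coaction G w e X mu.
Proof. split; apply Hmu. Qed.

End Action.

(* P is a sub-G-set of X x X' with the diagonal action mu /\ mu'. *)
Definition rel_invariant {G : Locale} {X X' : Type} (mu : X -> X -> G) (mu' : X' -> X' -> G)
    (P : X -> X' -> Prop) : Prop :=
  forall x x' z z', P x x' -> ~ P z z' -> L_meet (mu x z) (mu' x' z') = L_bot G.

Definition subprod {X X' : Type} (P : X -> X' -> Prop) : Type :=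
  {p : X * X' | P (fst p) (snd p)}.

Definition subprod_matrix {G : Locale} {X X' : Type} {P : X -> X' -> Prop}
    (mu : X -> X -> G) (mu' : X' -> X' -> G) (p q : subprod P) : G :=
  L_meet (mu (fst (proj1_sig p)) (fst (proj1_sig q))) (mu' (snd (proj1_sig p)) (snd (proj1_sig q))).

Lemma subprod_eq {X X' : Type} {P : X -> X' -> Prop} (p q : subprod P) :
  fst (proj1_sig p) = fst (proj1_sig q) -> snd (proj1_sig p) = snd (proj1_sig q) -> p = q.
Proof.
  destruct p as [[a b] Hp], q as [[c d] Hq]; simpl; intros -> ->.
  f_equal; apply proof_irrelevance.
Qed.

Section SubProduct.
Context {G : Locale} {w : G -> G -> G -> Prop} {e : G -> Prop} {iota : G -> G}.
Hypothesis HG : IsLocalicGroup G w e iota.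
Context {X X' : Type} {mu : X -> X -> G} {mu' : X' -> X' -> G}.
Hypotheses (Hmu : is_action G w e iota X mu) (Hmu' : is_action G w e iota X' mu').
Context {P : X -> X' -> Prop}.
Hypothesis HP : rel_invariant mu mu' P.

Lemma rel_invariant_sym (x z : X) (x' z' : X') :
  P z z' -> ~ P x x' -> L_meet (mu x z) (mu' x' z') = L_bot G.
Proof.
  intros Hz Hx.
  rewrite <- (action_iota Hmu z x), <- (action_iota Hmu' z' x'),
    <- (iota_meet _ _ _ _ HG), (HP z z' x x' Hz Hx).
  exact (iota_bot HG).
Qed.

Lemma subprod_lbij : is_lbij G (subprod P) (subprod_matrix mu mu').
Proof.
  split; [|split; [|split]].
  - intros [[x x'] Hp]; apply L_le_antisym; [apply L_top_greatest |].
    apply (le_of_action_row Hmu x); intros z.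
    apply (le_of_action_row Hmu' x'); intros z'.
    destruct (classic (P z z')) as [Hz | Hz].
    + eapply le_sup; [exists (exist _ (z, z') Hz); reflexivity |].
      apply meet_mono; [apply meet_r | apply L_le_refl].
    + apply (disjoint_meet_le (HP x x' z z' Hp Hz)); [apply meet_r | apply L_le_refl].
  - intros p q1 q2 Hne; apply le_bot_eq.
    destruct (classic (fst (proj1_sig q1) = fst (proj1_sig q2))) as [E1 | E1].
    + destruct (classic (snd (proj1_sig q1) = snd (proj1_sig q2))) as [E2 | E2].
      * exfalso; apply Hne, subprod_eq; assumption.
      * apply (disjoint_meet_le (action_row_disjoint Hmu' (snd (proj1_sig p)) _ _ E2)); apply meet_r.
    + apply (disjoint_meet_le (action_row_disjoint Hmu (fst (proj1_sig p)) _ _ E1)); apply meet_l.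
  - intros [[x x'] Hp]; apply L_le_antisym; [apply L_top_greatest |].
    apply (le_of_action_col Hmu x); intros z.
    apply (le_of_action_col Hmu' x'); intros z'.
    destruct (classic (P z z')) as [Hz | Hz].
    + eapply le_sup; [exists (exist _ (z, z') Hz); reflexivity |].
      apply meet_mono; [apply meet_r | apply L_le_refl].
    + apply (disjoint_meet_le (rel_invariant_sym z x z' x' Hp Hz));
        [apply meet_r | apply L_le_refl].
  - intros q1 q2 p Hne; apply le_bot_eq.
    destruct (classic (fst (proj1_sig q1) = fst (proj1_sig q2))) as [E1 | E1].
    + destruct (classic (snd (proj1_sig q1) = snd (proj1_sig q2))) as [E2 | E2].
      * exfalso; apply Hne, subprod_eq; assumption.
      * apply (disjoint_meet_le (action_col_disjoint Hmu' _ _ (snd (proj1_sig p)) E2)); apply meet_r.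
    + apply (disjoint_meet_le (action_col_disjoint Hmu _ _ (fst (proj1_sig p)) E1)); apply meet_l.
Qed.

Lemma subprod_w (p q : subprod P) :
  teq2 (w (subprod_matrix mu mu' p q))
       (cl2 G (fun a b => exists r,
                  a = subprod_matrix mu mu' p r /\ b = subprod_matrix mu mu' r q)).
Proof.
  destruct p as [[x x'] Hp], q as [[y y'] Hq]; unfold subprod_matrix; simpl.
  intros a b; split.
  - intros Hab; apply (w_meet _ _ _ _ HG) in Hab; destruct Hab as [Ha Hb].
    apply (proj1 (proj2 Hmu)) in Ha; apply (proj1 (proj2 Hmu')) in Hb.
    generalize (cl2_meet _ _ _ _ Ha Hb); apply cl2_min; [apply cl2_ideal |].
    intros c d [p1 [p2 [q1 [q2 [[z [-> ->]] [[z' [-> ->]] [-> ->]]]]]]].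
    destruct (classic (P z z')) as [Hz | Hz].
    + apply cl2_incl; exists (exist _ (z, z') Hz); simpl; auto.
    + rewrite (HP x x' z z' Hp Hz); apply tideal2_bot_l, cl2_ideal.
  - intros Hab; apply (w_meet _ _ _ _ HG); split;
      [apply (proj1 (proj2 Hmu)) | apply (proj1 (proj2 Hmu'))];
      revert a b Hab; apply cl2_min; try apply cl2_ideal;
      intros a b [[[z z'] Hz] [-> ->]]; simpl.
    + apply (proj1 (cl2_ideal _) (mu x z) (mu z y));
        [apply cl2_incl; exists z | apply meet_l | apply meet_l]; auto.
    + apply (proj1 (cl2_ideal _) (mu' x' z') (mu' z' y'));
        [apply cl2_incl; exists z' | apply meet_r | apply meet_r]; auto.
Qed.

Lemma subprod_action : is_action G w e iota (subprod P) (subprod_matrix mu mu').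
Proof.
  split; [apply subprod_lbij | split; [apply subprod_w | split]].
  - intros p q; unfold subprod_matrix.
    rewrite (e_meet _ _ _ _ HG), (proj1 (proj2 (proj2 Hmu))), (proj1 (proj2 (proj2 Hmu'))).
    split; [intros [E1 E2]; apply subprod_eq; assumption | intros ->; auto].
  - intros p q; unfold subprod_matrix.
    rewrite (iota_meet _ _ _ _ HG), (action_iota Hmu), (action_iota Hmu'); reflexivity.
Qed.

End SubProduct.

Section Relations.
Context {G : Locale} {w : G -> G -> G -> Prop} {e : G -> Prop} {iota : G -> G}.
Hypothesis HG : IsLocalicGroup G w e iota.
Context {X X' : Type} {mu : X -> X -> G} {mu' : X' -> X' -> G}.
Hypotheses (Hmu : is_action G w e iota X mu) (Hmu' : is_action G w e iota X' mu').

Lemma comod_morph_invariant (R : X -> X' -> Prop) :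
  is_comod_morph G X X' mu mu' R -> rel_invariant mu mu' R.
Proof.
  intros Hcm x x' z z' Hx Hz; apply le_bot_eq.
  eapply L_le_trans.
  { apply meet_mono; [apply L_le_refl |].
    apply (L_sup_ub G (fun g => exists x'', R x x'' /\ g = mu' x'' z')); eauto. }
  rewrite (Hcm x z'); apply meet_sup_le_r; intros _ [y [Hy ->]].
  rewrite (action_row_disjoint Hmu x z y); [apply L_le_refl | intros ->; contradiction].
Qed.

Lemma invariant_comod_morph (R : X -> X' -> Prop) :
  rel_invariant mu mu' R -> is_comod_morph G X X' mu mu' R.
Proof.
  intros HR x y'; apply L_le_antisym; apply L_sup_least.
  - intros _ [x' [Hx ->]]; apply (le_of_action_row Hmu x); intros y.
    destruct (classic (R y y')) as [Hy | Hy].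
    + eapply le_sup; [exists y; split; [exact Hy | reflexivity] | apply meet_r].
    + rewrite meet_comm, (HR x x' y y' Hx Hy); apply bot_le.
  - intros _ [y [Hy ->]]; apply (le_of_action_col Hmu' y'); intros x'.
    destruct (classic (R x x')) as [Hx | Hx].
    + eapply le_sup; [exists x'; split; [exact Hx | reflexivity] | apply meet_r].
    + rewrite (rel_invariant_sym HG Hmu Hmu' HR x y x' y' Hy Hx); apply bot_le.
Qed.

Lemma subprod_rel_span (P : X -> X' -> Prop) :
  rel_invariant mu mu' P ->
  is_beta_rel_span G w e iota X X' mu mu' (subprod P) (subprod_matrix mu mu')
    (fun p => fst (proj1_sig p)) (fun p => snd (proj1_sig p)).
Proof.
  intros HP; split; [apply subprod_action; assumption | split; [| split]].
  - intros p q; apply meet_l.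
  - intros p q; apply meet_r.
  - intros T tau h k _ _ _ Hhk t; destruct (Hhk t); apply subprod_eq; assumption.
Qed.

Lemma span_image_subprod (P : X -> X' -> Prop) (x : X) (x' : X') :
  span_image (fun p : subprod P => fst (proj1_sig p)) (fun p => snd (proj1_sig p)) x x' <-> P x x'.
Proof.
  split.
  - intros [[[a b] H] [E1 E2]]; simpl in *; subst; assumption.
  - intros H; exists (exist _ (x, x') H); auto.
Qed.

Section Span.
Context {S : Type} {sigma : S -> S -> G} {f : S -> X} {g : S -> X'}.
Hypothesis Hspan : is_beta_rel_span G w e iota X X' mu mu' S sigma f g.

Let Hsigma : is_action G w e iota S sigma := proj1 Hspan.
Let Hf : is_beta_morph G S X sigma mu f := proj1 (proj2 Hspan).
Let Hg : is_beta_morph G S X' sigma mu' g := proj1 (proj2 (proj2 Hspan)).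

Lemma span_image_invariant : rel_invariant mu mu' (span_image f g).
Proof.
  intros x x' z z' [s [<- <-]] Hz; apply le_bot_eq.
  apply (le_of_action_row Hsigma s); intros t.
  destruct (classic (f t = z)) as [<- | Hne].
  - destruct (classic (g t = z')) as [<- | Hne'].
    + exfalso; apply Hz; exists t; auto.
    + apply (disjoint_meet_le (action_row_disjoint Hmu' (g s) z' (g t) (not_eq_sym Hne')));
        [apply meet_r | apply Hg].
  - apply (disjoint_meet_le (action_row_disjoint Hmu (f s) z (f t) (not_eq_sym Hne)));
      [apply meet_l | apply Hf].
Qed.

(* Joint monicity, tested on the kernel pair of (f, g), which is itself a G-set. *)
Lemma span_injective (s1 s2 : S) : f s1 = f s2 -> g s1 = g s2 -> s1 = s2.
Proof.
  set (K := fun s t => f s = f t /\ g s = g t).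
  assert (HK : rel_invariant sigma sigma K).
  { intros x x' z z' [E1 E2] Hz; apply le_bot_eq.
    destruct (classic (f z = f z')) as [F | F].
    - destruct (classic (g z = g z')) as [F' | F']; [exfalso; apply Hz; split; assumption |].
      apply (disjoint_meet_le (action_row_disjoint Hmu' (g x) _ _ F')); [apply Hg |].
      rewrite E2; apply Hg.
    - apply (disjoint_meet_le (action_row_disjoint Hmu (f x) _ _ F)); [apply Hf |].
      rewrite E1; apply Hf. }
  intros E1 E2.
  apply (proj2 (proj2 (proj2 Hspan)) (subprod K) (subprod_matrix sigma sigma)
           (fun p => fst (proj1_sig p)) (fun p => snd (proj1_sig p))
           (subprod_action HG Hsigma Hsigma HK)
           (fun p q => meet_l _ _) (fun p q => meet_r _ _)
           (fun p => proj2_sig p) (exist _ (s1, s2) (conj E1 E2))).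
Qed.

Lemma span_matrix (a b : S) : sigma a b = L_meet (mu (f a) (f b)) (mu' (g a) (g b)).
Proof.
  apply L_le_antisym; [apply le_meet; [apply Hf | apply Hg] |].
  apply (le_of_action_row Hsigma a); intros u.
  destruct (classic (f u = f b)) as [F | F].
  - destruct (classic (g u = g b)) as [F' | F'].
    + rewrite (span_injective u b F F'); apply meet_r.
    + apply (disjoint_meet_le (action_row_disjoint Hmu' (g a) _ _ (not_eq_sym F')));
        [apply meet_r | apply Hg].
  - apply (disjoint_meet_le (action_row_disjoint Hmu (f a) _ _ (not_eq_sym F)));
      [apply meet_l | apply Hf].
Qed.

End Span.

Lemma comod_morph_iff_rel_span (R : X -> X' -> Prop) :
  is_comod_morph G X X' mu mu' R <->
  exists (S : Type) (sigma : S -> S -> G) (f : S -> X) (g : S -> X'),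
    is_beta_rel_span G w e iota X X' mu mu' S sigma f g /\
    (forall x x', R x x' <-> span_image f g x x').
Proof.
  split.
  - intros Hcm; exists (subprod R), (subprod_matrix mu mu'),
      (fun p => fst (proj1_sig p)), (fun p => snd (proj1_sig p)).
    split; [apply subprod_rel_span, comod_morph_invariant; assumption |].
    intros x x'; symmetry; apply span_image_subprod.
  - intros [S [sigma [f [g [Hspan HR]]]]]; apply invariant_comod_morph.
    intros x x' z z' Hx Hz; apply (span_image_invariant Hspan);
      [apply HR | rewrite <- HR]; assumption.
Qed.

Lemma rel_spans_iso_of_image
    (S : Type) (sigma : S -> S -> G) (f : S -> X) (g : S -> X')
    (S' : Type) (sigma' : S' -> S' -> G) (f' : S' -> X) (g' : S' -> X') :
  is_beta_rel_span G w e iota X X' mu mu' S sigma f g ->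
  is_beta_rel_span G w e iota X X' mu mu' S' sigma' f' g' ->
  (forall x x', span_image f g x x' <-> span_image f' g' x x') ->
  beta_spans_iso G X X' S sigma f g S' sigma' f' g'.
Proof.
  intros Hspan Hspan' Him.
  assert (Hphi : forall s, {s' : S' | f' s' = f s /\ g' s' = g s}).
  { intros s; apply constructive_indefinite_description.
    destruct (proj1 (Him (f s) (g s)) (ex_intro _ s (conj eq_refl eq_refl))) as [s' [E1 E2]].
    exists s'; auto. }
  assert (Hpsi : forall s', {s : S | f s = f' s' /\ g s = g' s'}).
  { intros s'; apply constructive_indefinite_description.
    destruct (proj2 (Him (f' s') (g' s')) (ex_intro _ s' (conj eq_refl eq_refl))) as [s [E1 E2]].
    exists s; auto. }
  exists (fun s => proj1_sig (Hphi s)), (fun s' => proj1_sig (Hpsi s')).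
  split; [| split; [| split; [| split]]].
  - intros a b; destruct (Hphi a) as [a' [Ea Fa]], (Hphi b) as [b' [Eb Fb]]; simpl.
    rewrite (span_matrix Hspan), (span_matrix Hspan'), Ea, Fa, Eb, Fb.
    apply L_le_refl.
  - intros a b; destruct (Hpsi a) as [a' [Ea Fa]], (Hpsi b) as [b' [Eb Fb]]; simpl.
    rewrite (span_matrix Hspan), (span_matrix Hspan'), Ea, Fa, Eb, Fb.
    apply L_le_refl.
  - intros s; destruct (Hphi s) as [s' [E1 E2]]; simpl; destruct (Hpsi s') as [t [F1 F2]]; simpl.
    apply (span_injective Hspan); congruence.
  - intros s'; destruct (Hpsi s') as [s [E1 E2]]; simpl; destruct (Hphi s) as [t [F1 F2]]; simpl.
    apply (span_injective Hspan'); congruence.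
  - intros s; destruct (Hphi s) as [s' [E1 E2]]; simpl; auto.
Qed.

End Relations.

Theorem mainTheorem8 (G : Locale) (w : G -> G -> G -> Prop) (e : G -> Prop)
  (iota : G -> G) (HG : IsLocalicGroup G w e iota) :
  exists Phi : forall X : Type, (X -> X -> G) -> (X -> X -> G),
    (forall (X : Type) (rho : X -> X -> G),
        is_coaction G w e X rho -> is_action G w e iota X (Phi X rho)) /\
    (forall (X : Type) (rho1 rho2 : X -> X -> G),
        is_coaction G w e X rho1 -> is_coaction G w e X rho2 ->
        Phi X rho1 = Phi X rho2 -> rho1 = rho2) /\
    (forall (X : Type) (mu : X -> X -> G),
        is_action G w e iota X mu ->
        exists rho, is_coaction G w e X rho /\ Phi X rho = mu) /\
    (forall (X X' : Type) (rho : X -> X -> G) (rho' : X' -> X' -> G)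
            (R : X -> X' -> Prop),
        is_coaction G w e X rho -> is_coaction G w e X' rho' ->
        (is_comod_morph G X X' rho rho' R <->
         exists (S : Type) (sigma : S -> S -> G) (f : S -> X) (g : S -> X'),
           is_beta_rel_span G w e iota X X' (Phi X rho) (Phi X' rho') S sigma f g /\
           (forall x x', R x x' <-> span_image f g x x'))) /\
    (forall (X X' : Type) (mu : X -> X -> G) (mu' : X' -> X' -> G)
            (S : Type) (sigma : S -> S -> G) (f : S -> X) (g : S -> X')
            (S' : Type) (sigma' : S' -> S' -> G) (f' : S' -> X) (g' : S' -> X'),
        is_action G w e iota X mu -> is_action G w e iota X' mu' ->
        is_beta_rel_span G w e iota X X' mu mu' S sigma f g ->
        is_beta_rel_span G w e iota X X' mu mu' S' sigma' f' g' ->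
        (forall x x', span_image f g x x' <-> span_image f' g' x x') ->
        beta_spans_iso G X X' S sigma f g S' sigma' f' g').
Proof.
  exists (fun X rho => rho).
  split; [| split; [| split; [| split]]].
  - intros X rho Hrho; exact (coaction_action HG Hrho).
  - intros X rho1 rho2 _ _ E; exact E.
  - intros X mu Hmu; exists mu; split; [exact (action_coaction Hmu) | reflexivity].
  - intros X X' rho rho' R Hrho Hrho'.
    exact (comod_morph_iff_rel_span HG (coaction_action HG Hrho) (coaction_action HG Hrho') R).
  - intros X X' mu mu' S sigma f g S' sigma' f' g' Hmu Hmu'.
    exact (rel_spans_iso_of_image HG Hmu Hmu' S sigma f g S' sigma' f' g').
Qed.
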